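(* Let $N\ge1$, let the parameter space $\Theta$ of the correlated Bernoulli random graph model be nondegenerate, let $g:\Theta\to\mathbb{R}$, and let $S:\mathcal{X}\to\mathbb{R}$ be an unbiased estimator of $g(\theta)$ (i.e. $\mathbb{E}_\theta(S)=g(\theta)$ for all $\theta\in\Theta$). Then a statistic $T:\mathcal{X}\to\mathbb{R}$ is an unbiased estimator of $g(\theta)$ if and only if $\overline{T}=\overline{S}$. In particular, $\overline{S}$ is an unbiased estimator of $g(\theta)$.
   Context: Correlated Bernoulli random graph model: fix a positive integer $N$ and let $\mathcal{R}=\{(p_1,\dots,p_N,\varrho_1,\dots,\varrho_N): p_i,\varrho_i\in[0,1]\}$. A parameter space is any subset $\Theta\subseteq\mathcal{R}$. For $\theta\in\Theta$, the random vectors $X,Y\in\{0,1\}^N$ are such that the pairs $(X_i,Y_i)$ are independent across $i$; $X_i,Y_i$ are each marginally Bernoulli$(p_i)$ with Pearson correlation $\varrho_i$ (so $\mathbb{P}(X_i=Y_i=1)=p_i^2+\varrho_ip_i(1-p_i)$, $\mathbb{P}(X_i=Y_i=0)=(1-p_i)^2+\varrho_ip_i(1-p_i)$, $\mathbb{P}(X_i=1,Y_i=0)=\mathbb{P}(X_i=0,Y_i=1)=(1-\varrho_i)p_i(1-p_i)$). Sample space $\mathcal{X}=\{(x,y):x,y\in\{0,1\}^N\}$. Let $\mathcal{R}^o=\{(p_1,\dots,p_N,0,\dots,0):p_i\in\mathbb{R}\}$; $\Theta$ is nondegenerate if $\Theta\cap\mathcal{R}^o$ has an interior point relative to $\mathcal{R}^o$.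 The disagreement vector $\mathcal{H}:\mathcal{X}\to\{0,\star,1\}^N$ has $i$th component $1$ if $x_i=y_i=1$, $0$ if $x_i=y_i=0$, $\star$ if $x_i\neq y_i$; for $h\in\{0,\star,1\}^N$ the disagreement class is $\mathcal{X}_h=\mathcal{H}^{-1}(h)$. For a statistic $S:\mathcal{X}\to\mathbb{R}$, its balanced variant $\overline{S}:\mathcal{X}\to\mathbb{R}$ is defined by $\overline{S}(x,y)=\frac{1}{|\mathcal{X}_h|}\sum_{(x',y')\in\mathcal{X}_h}S(x',y')$ where $h=\mathcal{H}(x,y)$. *)

From HB Require Import structures.
From mathcomp Require Import all_boot all_order all_algebra.
From mathcomp Require Import reals.
Set Implicit Arguments. Unset Strict Implicit. Unset Printing Implicit Defensive.
Import Order.TTheory GRing.Theory Num.Theory.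
Local Open Scope ring_scope.

Section CBRG.
Variables (R : realType) (N : nat).

(* A parameter theta = (p, rho), p rho : 'I_N -> R. *)
Definition param := ({ffun 'I_N -> R} * {ffun 'I_N -> R})%type.

Definition sample := ({ffun 'I_N -> bool} * {ffun 'I_N -> bool})%type.

Definition in_calR (th : param) : Prop :=
  forall i, 0 <= th.1 i <= 1 /\ 0 <= th.2 i <= 1.

(* Probability of (X_i, Y_i) = (a, b) with marginals Bernoulli(p), correlation r. *)
Definition pair_prob (p r : R) (a b : bool) : R :=
  match a, b with
  | true, true => p ^+ 2 + r * p * (1 - p)
  | false, false => (1 - p) ^+ 2 + r * p * (1 - p)
  | _, _ => (1 - r) * p * (1 - p)
  end.

Definition cbrg_prob (th : param) (z : sample) : R :=
  \prod_(i < N) pair_prob (th.1 i) (th.2 i) (z.1 i) (z.2 i).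

Definition cbrg_expect (th : param) (S : sample -> R) : R :=
  \sum_(z : sample) S z * cbrg_prob th z.

(* Nondegenerate: Theta meets R^o = {(p,0)} in a point interior relative to R^o. *)
Definition cbrg_nondegenerate (Theta : param -> Prop) : Prop :=
  exists p0 : {ffun 'I_N -> R}, exists e : R, 0 < e /\
    forall q : {ffun 'I_N -> R}, (forall i, `|q i - p0 i| < e) ->
      Theta (q, [ffun => 0]).

(* Disagreement vector: Some b if x_i = y_i = b, None (the symbol star) if x_i <> y_i. *)
Definition disagreement (z : sample) : {ffun 'I_N -> option bool} :=
  [ffun i => if z.1 i == z.2 i then Some (z.1 i) else None].

Definition dclass (h : {ffun 'I_N -> option bool}) : {set sample} :=
  [set z | disagreement z == h].

Definition cbrg_balanced (S : sample -> R) (z : sample) : R :=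
  (#|dclass (disagreement z)|%:R)^-1 *
    \sum_(z' in dclass (disagreement z)) S z'.

Definition cbrg_unbiased (Theta : param -> Prop) (g : param -> R) (T : sample -> R) : Prop :=
  forall th, Theta th -> cbrg_expect th T = g th.

End CBRG.

From HB Require Import structures.
From mathcomp Require Import all_boot all_order all_algebra.
From mathcomp Require Import reals.
From mathcomp Require Import ring lra.
From Stdlib Require Import FunctionalExtensionality.
Set Implicit Arguments. Unset Strict Implicit. Unset Printing Implicit Defensive.
Import Order.TTheory GRing.Theory Num.Theory.
Local Open Scope ring_scope.

(* P_theta is constant on every disagreement class, so averaging a statistic
   over the classes does not change its expectation: this gives the "if"
   direction and the unbiasedness of the balanced S.  Conversely, on the
   slice rho = 0 the expectation of F = T - S is
     sum_h (sum_(z in X_h) F z) * prod_i phi_(h_i)(p_i),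
   with phi_1 = p^2, phi_0 = (1-p)^2 and phi_star = p(1-p).  These quadratics
   are linearly independent, so in each coordinate Lagrange interpolation at
   three nodes near the interior point yields weights extracting the
   phi_c-coordinate; tensoring them over a grid of 3^N parameters recovers
   each class sum of F from expectations that all vanish. *)

Lemma sum_fiber_mean (R : numFieldType) (T U : finType) (k : T -> U)
    (F w : T -> R) :
  (forall z z', k z = k z' -> w z = w z') ->
  \sum_z (#|[set y | k y == k z]|%:R^-1
           * \sum_(y in [set y | k y == k z]) F y) * w z
  = \sum_z F z * w z.
Proof.
move=> w_fiber.
transitivity (\sum_z \sum_y
    ((k y == k z)%:R * #|[set x | k x == k y]|%:R^-1 * (F y * w y))).
  apply: eq_bigr => z _; rewrite big_mkcond mulr_sumr mulr_suml.
  apply: eq_bigr => y _; rewrite inE.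
  case: eqP => [kyz|_]; last by rewrite mulr0 !mul0r.
  by rewrite (w_fiber _ _ kyz) kyz mul1r mulrA.
rewrite exchange_big; apply: eq_bigr => y _; rewrite -!mulr_suml.
have card_fiber : \sum_z ((k y == k z)%:R : R) = #|[set x | k x == k y]|%:R.
  rewrite -sumr_const [RHS]big_mkcond; apply: eq_bigr => z _.
  by rewrite inE eq_sym; case: eqP.
have fiber_gt0 : (0 < #|[set x | k x == k y]|)%N.
  by apply/card_gt0P; exists y; rewrite inE.
by rewrite card_fiber mulfV ?mul1r // pnatr_eq0 -lt0n.
Qed.

Lemma prod_eq_natr (R : comPzSemiRingType) (I : finType) (T : eqType)
    (f g : {ffun I -> T}) :
  \prod_i ((f i == g i)%:R : R) = (f == g)%:R.
Proof.
have [<-|neq_fg] := eqVneq f g; first by rewrite big1 // => i _; rewrite eqxx.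
have /existsP[i neq_i] : [exists i, f i != g i].
  rewrite -negb_forall; apply: contra neq_fg => /forallP eq_fg.
  by apply/eqP/ffunP => i; apply/eqP.
by rewrite (bigD1 i) //= (negbTE neq_i) mul0r.
Qed.

Section CorrelatedBernoulli.
Variables (R : realType) (N : nat).

Definition dsymbol (a b : bool) : option bool :=
  if a == b then Some a else None.

Lemma disagreementE (z : sample N) i :
  disagreement z i = dsymbol (z.1 i) (z.2 i).
Proof. by rewrite ffunE. Qed.

Lemma pair_prob_dsymbol (p r : R) a b a' b' :
  dsymbol a b = dsymbol a' b' -> pair_prob p r a b = pair_prob p r a' b'.
Proof. by case: a; case: b; case: a'; case: b'. Qed.

Lemma cbrg_prob_disagreement (th : param R N) z z' :
  disagreement z = disagreement z' -> cbrg_prob th z = cbrg_prob th z'.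
Proof.
move=> eq_dis; apply: eq_bigr => i _; apply: pair_prob_dsymbol.
by rewrite -!disagreementE eq_dis.
Qed.

Lemma cbrg_expect_balanced (th : param R N) F :
  cbrg_expect th (cbrg_balanced F) = cbrg_expect th F.
Proof. exact: sum_fiber_mean (cbrg_prob_disagreement th). Qed.

Lemma cbrg_expectB (th : param R N) T S :
  cbrg_expect th (fun z => T z - S z) = cbrg_expect th T - cbrg_expect th S.
Proof.
by rewrite /cbrg_expect -sumrB; apply: eq_bigr => z _; rewrite mulrBl.
Qed.

Lemma eq_cbrg_balanced (T S : sample N -> R) :
  (forall h, \sum_(z in dclass h) T z = \sum_(z in dclass h) S z) ->
  cbrg_balanced T = cbrg_balanced S.
Proof.
move=> eqTS; apply: functional_extensionality => z.
by rewrite /cbrg_balanced eqTS.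
Qed.

Definition null_prob (c : option bool) : {poly R} :=
  match c with
  | Some true => 'X ^+ 2
  | Some false => (1 - 'X) ^+ 2
  | None => 'X * (1 - 'X)
  end.

Lemma pair_prob_null (q : R) a b :
  pair_prob q 0 a b = (null_prob (dsymbol a b)).[q].
Proof. by case: a; case: b; rewrite /= !hornerE; ring. Qed.

Lemma size_null_prob c : (size (null_prob c) <= 3)%N.
Proof.
have size_1subX : size (1 - 'X : {poly R}) = 2%N.
  by rewrite -opprB size_polyN size_XsubC.
case: c => [[]|] /=; first by rewrite size_polyXn.
  by apply: leq_trans (size_exp_leq _ _) _; rewrite size_1subX.
by apply: leq_trans (size_mul_leq _ _) _; rewrite size_polyX size_1subX.
Qed.

(* X^2, (1-X)^2 and X(1-X) take the values (1, 0, 1/4), (0, 1, 1/4) and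
   (0, 0, 1/4) at 1, 0 and 1/2. *)
Definition null_coord (c : option bool) (f : {poly R}) : R :=
  match c with
  | Some true => f.[1]
  | Some false => f.[0]
  | None => 4 * f.[2^-1] - f.[1] - f.[0]
  end.

Lemma null_coord_null_prob c c' : null_coord c (null_prob c') = (c == c')%:R.
Proof.
by case: c => [[]|]; case: c' => [[]|];
  rewrite /= ?horner_exp ?hornerM ?hornerD ?hornerN ?hornerX ?hornerC; field.
Qed.

Lemma null_coord_sum c n (a : 'I_n -> R) (L : 'I_n -> {poly R}) :
  null_coord c (\sum_k (a k)%:P * L k) = \sum_k a k * null_coord c (L k).
Proof.
have hornerS x : (\sum_k (a k)%:P * L k).[x] = \sum_k a k * (L k).[x].
  by rewrite horner_sum; apply: eq_bigr => k _; rewrite hornerCM.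
case: c => [[]|] /=; rewrite !hornerS //.
by rewrite mulr_sumr -!sumrB; apply: eq_bigr => k _; ring.
Qed.

Definition node (p d : R) (k : nat) : R := p + k%:R * d.

Lemma node_inj p d : d != 0 -> injective (node p d).
Proof. by move=> d0 j k /addrI /(mulIf d0) /eqP; rewrite eqr_nat => /eqP. Qed.

Definition dual_weight (p d : R) (c : option bool) (k : 'I_3) : R :=
  null_coord c (tnth (3.-lagrange (node p d)) k).

Lemma dual_weight_null_prob p d c c' : d != 0 ->
  \sum_(k < 3) dual_weight p d c k * (null_prob c').[node p d k] = (c == c')%:R.
Proof.
move=> d0; rewrite -null_coord_null_prob.
rewrite [null_prob c' in RHS](@lagrange_gen _ 3 _ isT (node_inj (p := p) d0)).
  by rewrite null_coord_sum; apply: eq_bigr => k _; rewrite mulrC.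
exact: size_null_prob.
Qed.

Lemma cbrg_expect_null (q : {ffun 'I_N -> R}) F :
  cbrg_expect (q, [ffun => 0]) F
  = \sum_z F z * \prod_i (null_prob (disagreement z i)).[q i].
Proof.
apply: eq_bigr => z _; congr (_ * _); apply: eq_bigr => i _.
by rewrite ffunE disagreementE pair_prob_null.
Qed.

Definition grid (p : {ffun 'I_N -> R}) (d : R) (f : {ffun 'I_N -> 'I_3}) :
  {ffun 'I_N -> R} := [ffun i => node (p i) d (f i)].

Lemma grid_dual_weight_null_prob (p : {ffun 'I_N -> R}) d
    (h h' : {ffun 'I_N -> option bool}) : d != 0 ->
  \sum_(f : {ffun 'I_N -> 'I_3}) (\prod_i dual_weight (p i) d (h i) (f i))
          * \prod_i (null_prob (h' i)).[grid p d f i]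
  = (h == h')%:R.
Proof.
move=> d0.
under eq_bigr => f _ do rewrite -big_split /=.
under eq_bigr => f _ do under eq_bigr => i _ do rewrite ffunE.
rewrite -(bigA_distr_bigA (fun i k =>
  dual_weight (p i) d (h i) k * (null_prob (h' i)).[node (p i) d k])) /=.
under eq_bigr do rewrite dual_weight_null_prob //.
exact: prod_eq_natr.
Qed.

Lemma grid_dual_weight_expect (p : {ffun 'I_N -> R}) d
    (h : {ffun 'I_N -> option bool}) F : d != 0 ->
  \sum_(f : {ffun 'I_N -> 'I_3}) (\prod_i dual_weight (p i) d (h i) (f i))
          * cbrg_expect (grid p d f, [ffun => 0]) F
  = \sum_(z in dclass h) F z.
Proof.
move=> d0.
under eq_bigr do rewrite cbrg_expect_null mulr_sumr.
rewrite exchange_big [RHS]big_mkcond; apply: eq_bigr => z _.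
under eq_bigr do rewrite mulrCA.
rewrite -mulr_sumr grid_dual_weight_null_prob // inE eq_sym.
by case: eqP; rewrite ?mulr1 ?mulr0.
Qed.

Lemma dclass_sum_eq0 F (p : {ffun 'I_N -> R}) e : 0 < e ->
  (forall q : {ffun 'I_N -> R}, (forall i, `|q i - p i| < e) ->
     cbrg_expect (q, [ffun => 0]) F = 0) ->
  forall h, \sum_(z in dclass h) F z = 0.
Proof.
move=> e_gt0 F0 h; have d_gt0 : 0 < e / 3 by rewrite divr_gt0.
rewrite -(grid_dual_weight_expect p h F (lt0r_neq0 d_gt0)) big1 // => f _.
rewrite F0 ?mulr0 // => i.
have fi_le2 : (f i)%:R <= 2 :> R by rewrite ler_nat -ltnS.
rewrite ffunE /node addrAC subrr add0r ger0_norm.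
  by apply: le_lt_trans (ler_wpM2r (ltW d_gt0) fi_le2) _; lra.
by rewrite mulr_ge0 // ltW.
Qed.

End CorrelatedBernoulli.

Theorem theorem2 (R : realType) (N : nat) (hN : (0 < N)%N)
  (Theta : param R N -> Prop)
  (hTheta : forall th, Theta th -> in_calR th)
  (hnd : cbrg_nondegenerate Theta)
  (g : param R N -> R) (S : sample N -> R)
  (hS : cbrg_unbiased Theta g S) :
  (forall T : sample N -> R,
     cbrg_unbiased Theta g T <-> cbrg_balanced T = cbrg_balanced S)
  /\ cbrg_unbiased Theta g (cbrg_balanced S).
Proof.
have balanced_S : cbrg_unbiased Theta g (cbrg_balanced S).
  by move=> th /hS <-; exact: cbrg_expect_balanced.
split=> // T; split=> [hT | eqTS th th_in].
- apply: eq_cbrg_balanced => h; apply/eqP; rewrite -subr_eq0 -sumrB; apply/eqP.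
  case: hnd => p [e [e_gt0 Theta_near]].
  apply: (dclass_sum_eq0 e_gt0) => q /Theta_near q_in.
  by rewrite cbrg_expectB hT ?hS ?subrr.
- by rewrite -cbrg_expect_balanced eqTS cbrg_expect_balanced hS.
Qed.
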